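(* Let $d\ge 2$. There exist constants $C>1$ and $c\in(0,1)$ depending only on $d$ such that the following holds for every finite field $\mathbb F_q$ of characteristic greater than two. Let $j\in\mathbb F_q^*$, $S_j=\{x\in\mathbb F_q^d: x_1^2+\cdots+x_d^2=j\}$, $E\subset S_j$ and $F\subset\mathbb F_q^d$. If $|E||F|\ge Cq^d$, then $|\Pi(E,F)|\ge c\,q$.
   Context: $\mathbb F_q$ is a finite field with $q$ elements and characteristic greater than two; $\mathbb F_q^*=\mathbb F_q\setminus\{0\}$. For $E,F\subset\mathbb F_q^d$, $\Pi(E,F)=\{x\cdot y: x\in E,\ y\in F\}$ with $x\cdot y=\sum_i x_iy_i$. *)

From HB Require Import structures.
From mathcomp Require Import all_boot all_order all_algebra all_field.
Set Implicit Arguments. Unset Strict Implicit. Unset Printing Implicit Defensive.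
Import Order.TTheory GRing.Theory Num.Theory.
Local Open Scope ring_scope.

Definition dotv (K : fieldType) (d : nat) (x y : 'rV[K]_d) : K :=
  \sum_(i < d) x 0 i * y 0 i.

Definition sphere (K : finFieldType) (d : nat) (j : K) : {set 'rV[K]_d} :=
  [set x : 'rV[K]_d | dotv x x == j].

Definition dotset (K : finFieldType) (d : nat) (E F : {set 'rV[K]_d}) : {set K} :=
  [set dotv x y | x in E, y in F].

From HB Require Import structures.
From mathcomp Require Import all_boot all_order all_algebra all_field.
From mathcomp Require Import ring.
Import Order.TTheory GRing.Theory Num.Theory.
Set Implicit Arguments. Unset Strict Implicit. Unset Printing Implicit Defensive.
Local Open Scope ring_scope.

(* Let nu(t) count the pairs (x, y) in E x F with x.y = t.  Cauchy-Schwarz on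
   the support of nu gives (|E||F|)^2 <= |Pi(E,F)| * sum_t nu(t)^2, so it
   suffices to bound this energy.  Writing q nu(t) - |E||F| as the sum over
   x in E of q f_x(t) - |F|, where f_x(t) = #{y in F | x.y = t}, Cauchy-Schwarz
   again bounds the variance of nu by q |E| sum_{x in E} D(x), where
   D(x) = q sum_t f_x(t)^2 - |F|^2 >= 0.  Now D is invariant under x |-> a x,
   every line through the origin meets S_j (j <> 0) in at most two points, and
   sum_{x in F_q^d} D(x) = |F| q^d (q - 1) because a hyperplane has q^(d-1)
   points; hence sum_{x in S_j} D(x) <= 2 |F| q^d.  This yields
   q sum_t nu(t)^2 <= (|E||F|)^2 + 2 q^d |E||F|, and |E||F| >= 2 q^d forces
   |Pi(E,F)| >= q/2. *)

Section DotAlgebra.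
Variables (K : fieldType) (d : nat).
Implicit Types (a : K) (x y z : 'rV[K]_d).

Lemma dotvDl x z y : dotv (x + z) y = dotv x y + dotv z y.
Proof. by rewrite /dotv -big_split; apply: eq_bigr => i _; rewrite mxE mulrDl. Qed.

Lemma dotvZl a x y : dotv (a *: x) y = a * dotv x y.
Proof. by rewrite /dotv mulr_sumr; apply: eq_bigr => i _; rewrite mxE mulrA. Qed.

Lemma dotvBr x y y' : dotv x (y - y') = dotv x y - dotv x y'.
Proof. by rewrite /dotv -sumrB; apply: eq_bigr => i _; rewrite !mxE mulrBr. Qed.

Lemma dotvZZ a x : dotv (a *: x) (a *: x) = a ^+ 2 * dotv x x.
Proof.
rewrite dotvZl /dotv !mulr_sumr.
by apply: eq_bigr => i _; rewrite mxE; ring.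
Qed.

End DotAlgebra.

Lemma cauchy_schwarz_sum (R : realDomainType) (I : finType) (A : {pred I}) (a : I -> R) :
  (\sum_(i in A) a i) ^+ 2 <= #|A|%:R * \sum_(i in A) a i ^+ 2.
Proof.
have expand : \sum_(i in A) \sum_(j in A) (a i - a j) ^+ 2
    = 2 * (#|A|%:R * \sum_(i in A) a i ^+ 2 - (\sum_(i in A) a i) ^+ 2).
  have -> : \sum_(i in A) \sum_(j in A) (a i - a j) ^+ 2 =
      \sum_(i in A) \sum_(j in A) (a i ^+ 2 + a j ^+ 2)
      - 2 * \sum_(i in A) \sum_(j in A) a i * a j.
    rewrite mulr_sumr -sumrB; apply: eq_bigr => i _.
    by rewrite mulr_sumr -sumrB; apply: eq_bigr => j _; ring.
  rewrite -big_distrlr /=.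
  under eq_bigr do rewrite big_split /= sumr_const.
  by rewrite big_split /= sumrMnl sumr_const; ring.
rewrite -subr_ge0 -(pmulr_rge0 _ (ltr0Sn R 1)) -expand.
by apply: sumr_ge0 => i _; apply: sumr_ge0 => j _; apply: sqr_ge0.
Qed.

Lemma sum_sqr_dev (R : comPzRingType) (I : finType) (g : I -> R) (a b : R) :
  \sum_i (a * g i - b) ^+ 2 =
  a ^+ 2 * \sum_i g i ^+ 2 - 2 * a * b * \sum_i g i + b ^+ 2 *+ #|I|.
Proof.
rewrite (eq_bigr (fun i => a ^+ 2 * g i ^+ 2 + (- (2 * a * b) * g i + b ^+ 2)));
  last by move=> i _; ring.
by rewrite !big_split /= -!mulr_sumr sumr_const; ring.
Qed.

Lemma ler_sum_subset (R : numDomainType) (T : finType) (A B : {pred T}) (g : T -> R) :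
  {subset A <= B} -> (forall x, 0 <= g x) -> \sum_(x in A) g x <= \sum_(x in B) g x.
Proof.
move=> AB g_ge0; rewrite [X in _ <= X](bigID [in A]) /=.
have -> : \sum_(x in B | x \in A) g x = \sum_(x in A) g x.
  by apply: eq_bigl => x; rewrite andb_idl // => /AB.
by rewrite lerDl sumr_ge0.
Qed.

Lemma sum_eq_indicator (R : pzSemiRingType) (T : finType) (A : {pred T}) (a : T) :
  \sum_(t in A) ((a == t)%:R : R) = (a \in A)%:R.
Proof.
rewrite big_mkcond (bigD1 a) //= eqxx big1 ?addr0 => [|t /negbTE ta].
  by case: (a \in A).
by rewrite eq_sym ta if_same.
Qed.

Lemma sum_eq_indicator_all (R : pzSemiRingType) (T : finType) (a : T) :
  \sum_t ((a == t)%:R : R) = 1.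
Proof. exact: (sum_eq_indicator _ predT). Qed.

Lemma card_line_sphere (K : finFieldType) (d : nat) (j : K) (z : 'rV[K]_d) :
  j != 0 -> (#|[set a : K | a *: z \in sphere d j]| <= 2)%N.
Proof.
move=> j0; set A := [set a | _].
have [->|[b bA]] := set_0Vmem A; first by rewrite cards0.
suff sub : A \subset [set b; - b].
  by apply: leq_trans (subset_leq_card sub) _; rewrite cards2; case: (b != - b).
have sphereE a : (a \in A) = (a ^+ 2 * dotv z z == j).
  by rewrite !inE dotvZZ.
apply/subsetP => a; rewrite sphereE !inE => /eqP aS.
move: bA; rewrite sphereE => /eqP bS.
have zz0 : dotv z z != 0 by apply: contra_neq j0 => zz0; rewrite -bS zz0 mulr0.
have /eqP : a ^+ 2 = b ^+ 2 by apply: (mulIf zz0); rewrite aS bS.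
by rewrite eqf_sqr.
Qed.

Section DotCounts.
Variables (R : realDomainType) (K : finFieldType) (d : nat).
Local Notation q := (#|K|%:R : R).
Local Notation qd := ((#|K| ^ d)%:R : R).
Implicit Types (E F : {set 'rV[K]_d}) (x y z w : 'rV[K]_d) (t : K).

Definition fibre_count F x t : R := \sum_(y in F) (dotv x y == t)%:R.

Definition dot_collisions F x : R :=
  \sum_(y in F) \sum_(y' in F) (dotv x y == dotv x y')%:R.

Definition collision_excess F x : R := q * dot_collisions F x - #|F|%:R ^+ 2.

Definition dot_count E F t : R := \sum_(x in E) fibre_count F x t.

Lemma card_field_gt1 : 1 < q.
Proof.
by rewrite ltr1n; apply/card_gt1P; exists 0, 1; rewrite eq_sym oner_neq0.
Qed.

Lemma card_field_gt0 : 0 < q.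
Proof. exact: lt_trans ltr01 card_field_gt1. Qed.

Lemma sum_fibre_count F x : \sum_t fibre_count F x t = #|F|%:R.
Proof.
rewrite exchange_big /=.
by under eq_bigr do rewrite sum_eq_indicator_all; rewrite sumr_const.
Qed.

Lemma sum_fibre_count_sqr F x : \sum_t fibre_count F x t ^+ 2 = dot_collisions F x.
Proof.
under eq_bigr do rewrite expr2 big_distrlr /=.
rewrite exchange_big /=; apply: eq_bigr => y _.
rewrite exchange_big /=; apply: eq_bigr => y' _.
under eq_bigr => t _ do rewrite -natrM mulnb.
have [<-|ne] := eqVneq (dotv x y) (dotv x y').
  by under eq_bigr do rewrite andbb; rewrite sum_eq_indicator_all ?eqxx.
rewrite big1 // => t _; have [xyt|] //= := eqVneq (dotv x y) t.
by rewrite -xyt eq_sym (negbTE ne).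
Qed.

Lemma sum_fibre_count_dev F x :
  \sum_t (q * fibre_count F x t - #|F|%:R) ^+ 2 = q * collision_excess F x.
Proof.
by rewrite sum_sqr_dev sum_fibre_count sum_fibre_count_sqr /collision_excess; ring.
Qed.

Lemma collision_excess_ge0 F x : 0 <= collision_excess F x.
Proof.
rewrite -(pmulr_rge0 _ card_field_gt0) -sum_fibre_count_dev.
by apply: sumr_ge0 => t _; apply: sqr_ge0.
Qed.

Lemma collision_excessZ F a x :
  a != 0 -> collision_excess F (a *: x) = collision_excess F x.
Proof.
move=> a0; congr (q * _ - _); apply: eq_bigr => y _; apply: eq_bigr => y' _.
by rewrite !dotvZl (inj_eq (mulfI a0)).
Qed.

Lemma card_rV : #|{: 'rV[K]_d}| = (#|K| ^ d)%N.
Proof. by rewrite card_mx mul1n. Qed.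

Lemma sum_dotv_eq0 w : w != 0 -> q * \sum_z ((dotv z w == 0)%:R : R) = qd.
Proof.
move=> w0; have [i wi0] : exists i, w 0 i != 0.
  apply/existsP; apply: contraR w0 => /existsPn wi0.
  by apply/eqP/rowP => i; rewrite mxE; move: (wi0 i); rewrite negbK => /eqP.
pose e : 'rV[K]_d := (w 0 i)^-1 *: delta_mx 0 i.
have ew : dotv e w = 1.
  rewrite dotvZl /dotv (bigD1 i) //= big1 => [|k ki].
    by rewrite mxE !eqxx mul1r addr0 mulVf.
  by rewrite mxE (negbTE ki) mul0r.
have fibreE t : \sum_z ((dotv z w == t)%:R : R) = \sum_z (dotv z w == 0)%:R.
  rewrite (reindex_inj (addIr (t *: e))) /=; apply: eq_bigr => z _.
  by rewrite dotvDl dotvZl ew mulr1 -subr_eq0 addrK.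
have -> : q * \sum_z ((dotv z w == 0)%:R : R) = \sum_t \sum_z (dotv z w == t)%:R.
  by under [RHS]eq_bigr do rewrite fibreE; rewrite sumr_const mulr_natl.
rewrite exchange_big /=.
by under eq_bigr do rewrite sum_eq_indicator_all; rewrite sumr_const card_rV.
Qed.

Lemma sum_dotv_coincide y y' :
  q * \sum_z ((dotv z y == dotv z y')%:R : R) = qd + (y == y')%:R * (qd * (q - 1)).
Proof.
have [<-|yy'] := eqVneq y y'.
  by under eq_bigr do rewrite eqxx; rewrite sumr_const card_rV /= !mulr1n; ring.
rewrite mul0r addr0 -(sum_dotv_eq0 (w := y - y')) ?subr_eq0 //.
by congr (_ * _); apply: eq_bigr => z _; rewrite dotvBr subr_eq0.
Qed.

Lemma sum_collision_excess F : \sum_z collision_excess F z = #|F|%:R * qd * (q - 1).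
Proof.
rewrite /collision_excess sumrB -mulr_sumr sumr_const card_rV.
have -> : q * \sum_z dot_collisions F z =
    \sum_(y in F) \sum_(y' in F) (qd + (y == y')%:R * (qd * (q - 1))).
  rewrite exchange_big mulr_sumr; apply: eq_bigr => y _.
  rewrite exchange_big mulr_sumr; apply: eq_bigr => y' _.
  exact: sum_dotv_coincide.
under eq_bigr => y yF do rewrite big_split /= sumr_const -mulr_suml sum_eq_indicator yF.
by rewrite sumr_const /= mulr1n mul1r; ring.
Qed.

Lemma sum_scale_sphere_le (j : K) (h : 'rV[K]_d -> R) :
  j != 0 -> (forall z, 0 <= h z) -> (forall a z, a != 0 -> h (a *: z) = h z) ->
  (q - 1) * \sum_(x in sphere d j) h x <= 2 * \sum_z h z.
Proof.
move=> j0 h_ge0 hZ.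
have nonzero_card : \sum_(a : K | a != 0) (1 : R) = q - 1.
  have split0 : \sum_(a : K) (1 : R) = 1 + \sum_(a : K | a != 0) 1 := bigD1 0 isT.
  by rewrite sumr_const in split0; rewrite split0 addrC addKr.
have sum_sphereE a : a != 0 ->
    \sum_(x in sphere d j) h x = \sum_z (a *: z \in sphere d j)%:R * h z.
  move=> a0; rewrite (reindex_inj (scalerI a0)) /= big_mkcond.
  by apply: eq_bigr => z _; rewrite hZ //; case: (_ \in _); rewrite ?mul1r ?mul0r.
have line_le z : \sum_(a | a != 0) ((a *: z \in sphere d j)%:R : R) <= 2.
  pose A := [set a : K | (a != 0) && (a *: z \in sphere d j)].
  have -> : \sum_(a | a != 0) ((a *: z \in sphere d j)%:R : R) = \sum_(a in A) 1.
    rewrite big_mkcond [RHS]big_mkcond; apply: eq_bigr => a _.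
    by rewrite [a \in A]inE; case: (a != 0); case: (_ \in _).
  rewrite sumr_const ler_nat; apply: leq_trans (card_line_sphere z j0).
  by apply: subset_leq_card; apply/subsetP => a; rewrite !inE => /andP[].
rewrite -nonzero_card mulr_suml.
under eq_bigr => a a0 do rewrite mul1r (sum_sphereE a a0).
rewrite exchange_big /= mulr_sumr; apply: ler_sum => z _.
by rewrite -mulr_suml mulrC [2 * _]mulrC ler_wpM2l.
Qed.

Lemma sum_collision_excess_le E F (j : K) : j != 0 -> E \subset sphere d j ->
  \sum_(x in E) collision_excess F x <= 2 * #|F|%:R * qd.
Proof.
move=> j0 ES; apply: le_trans (ler_sum_subset (subsetP ES) (@collision_excess_ge0 F)) _.
have q1_gt0 : 0 < q - 1 by rewrite subr_gt0 card_field_gt1.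
rewrite -(ler_pM2l q1_gt0) [X in _ <= X](_ : _ = 2 * \sum_z collision_excess F z).
  apply: sum_scale_sphere_le => //.
  - exact: collision_excess_ge0.
  - exact: collision_excessZ.
by rewrite sum_collision_excess; ring.
Qed.

Lemma sum_dot_count E F : \sum_t dot_count E F t = #|E|%:R * #|F|%:R.
Proof.
rewrite exchange_big /=.
by under eq_bigr do rewrite sum_fibre_count; rewrite sumr_const mulr_natl.
Qed.

Lemma sum_dot_count_dotset E F :
  \sum_(t in dotset E F) dot_count E F t = #|E|%:R * #|F|%:R.
Proof.
have sum_row x : x \in E -> \sum_(t in dotset E F) fibre_count F x t = #|F|%:R.
  move=> xE; rewrite exchange_big /= -sumr_const; apply: eq_bigr => y yF.
  by rewrite sum_eq_indicator imset2_f.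
by rewrite exchange_big /= (eq_bigr _ sum_row) sumr_const mulr_natl.
Qed.

Lemma dot_count_energy_le E F (j : K) : j != 0 -> E \subset sphere d j ->
  q * \sum_t dot_count E F t ^+ 2 <=
  (#|E|%:R * #|F|%:R) ^+ 2 + 2 * qd * (#|E|%:R * #|F|%:R).
Proof.
move=> j0 ES; set N := #|E|%:R * #|F|%:R.
have devE : \sum_t (q * dot_count E F t - N) ^+ 2 =
    q * (q * \sum_t dot_count E F t ^+ 2 - N ^+ 2).
  by rewrite sum_sqr_dev sum_dot_count -/N; ring.
have dev_split t :
    q * dot_count E F t - N = \sum_(x in E) (q * fibre_count F x t - #|F|%:R).
  by rewrite sumrB -mulr_sumr sumr_const -[_ *+ #|E|]mulr_natr [_ * #|E|%:R]mulrC.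
have dev_le : \sum_t (q * dot_count E F t - N) ^+ 2 <=
    #|E|%:R * (q * \sum_(x in E) collision_excess F x).
  under eq_bigr do rewrite dev_split.
  apply: le_trans (ler_sum _ (fun t _ => cauchy_schwarz_sum _ _)) _.
  rewrite -mulr_sumr exchange_big /= (eq_bigr _ (fun x _ => sum_fibre_count_dev F x)).
  by rewrite -mulr_sumr.
have := le_trans dev_le (ler_wpM2l (ler0n _ _)
  (ler_wpM2l (ltW card_field_gt0) (sum_collision_excess_le F j0 ES))).
rewrite devE mulrCA ler_pM2l ?card_field_gt0 // lerBlDl.
suff -> : #|E|%:R * (2 * #|F|%:R * qd) = 2 * qd * N by [].
by rewrite /N; ring.
Qed.

Lemma card_dotset_ge E F (j : K) : j != 0 -> E \subset sphere d j ->
  q * (#|E|%:R * #|F|%:R) ^+ 2 <=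
  #|dotset E F|%:R * ((#|E|%:R * #|F|%:R) ^+ 2 + 2 * qd * (#|E|%:R * #|F|%:R)).
Proof.
move=> j0 ES.
have support_cs : (#|E|%:R * #|F|%:R) ^+ 2 <=
    #|dotset E F|%:R * \sum_t dot_count E F t ^+ 2.
  rewrite -sum_dot_count_dotset; apply: le_trans (cauchy_schwarz_sum _ _) _.
  by rewrite ler_wpM2l // (ler_sum_subset (B := predT)) // => t; apply: sqr_ge0.
apply: le_trans (ler_wpM2l (ltW card_field_gt0) support_cs) _.
by rewrite mulrCA ler_wpM2l // (dot_count_energy_le F j0 ES).
Qed.

End DotCounts.

Theorem theorem3p2 (d : nat) (hd : (2 <= d)%N) :
  exists (C c : rat), 1 < C /\ 0 < c < 1 /\
    forall (K : finFieldType), 2%N \notin [pchar K] ->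
    forall (j : K), j != 0 ->
    forall (E F : {set 'rV[K]_d}), E \subset sphere d j ->
      C * (#|K| ^ d)%:R <= (#|E| * #|F|)%:R ->
      c * #|K|%:R <= #|dotset E F|%:R.
Proof.
exists 2, 2^-1; split; first by rewrite ltr1n.
split; first by rewrite invr_gt0 invf_lt1 ?ltr1n.
move=> K _ j j0 E F ES.
set N : rat := #|E|%:R * #|F|%:R; rewrite natrM -/N => large.
have N_gt0 : 0 < N.
  by apply: lt_le_trans large; rewrite mulr_gt0 // natrX exprn_gt0 ?card_field_gt0.
have N2_gt0 : 0 < N ^+ 2 by rewrite exprn_gt0.
have le_2N2 : N ^+ 2 + 2 * (#|K| ^ d)%:R * N <= 2 * N ^+ 2.
  by rewrite [2 * N ^+ 2]mulr_natl mulr2n lerD2l expr2 ler_wpM2r // ltW.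
have := le_trans (card_dotset_ge rat F j0 ES) (ler_wpM2l (ler0n _ _) le_2N2).
rewrite -/N => bound.
by rewrite ler_pdivrMl // -(ler_pM2r N2_gt0) mulrAC [X in _ <= X]mulrC.
Qed.
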